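(* Let $\Omega_{Q_3}$ be the infinite cubic lattice graph, i.e. the graph with vertex set $\mathbb{Z}^3$ in which two vertices are adjacent iff they differ by $1$ in exactly one coordinate and agree in the others. Then $12 \leq \chi_{td}(\Omega_{Q_3}) \leq 13$.
   Context: For a (possibly infinite) simple graph $G$ and a positive integer $k$, a proper $k$-total difference labeling of $G$ is a function $f: V(G)\to\{1,\dots,k\}$, extended to edges by $f(\{u,v\}) = |f(u)-f(v)|$, such that: (i) adjacent vertices receive different labels; (ii) two distinct edges sharing a vertex receive different labels; (iii) no edge receives the same label as either of its endpoints. $\chi_{td}(G)$ denotes the smallest $k$ for which $G$ has a proper $k$-total difference labeling. *)

From Stdlib Require Import ZArith.
Open Scope Z_scope.

Definition edge_label {V : Type} (f : V -> Z) (u v : V) : Z := Z.abs (f u - f v).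

Definition proper_total_difference_labeling {V : Type} (adj : V -> V -> Prop)
    (k : Z) (f : V -> Z) : Prop :=
  (forall v, 1 <= f v <= k) /\
  (forall u v, adj u v -> f u <> f v) /\
  (forall u v w, adj u v -> adj u w -> v <> w -> edge_label f u v <> edge_label f u w) /\
  (forall u v, adj u v -> edge_label f u v <> f u /\ edge_label f u v <> f v).

Definition has_ptd_labeling {V : Type} (adj : V -> V -> Prop) (k : Z) : Prop :=
  exists f : V -> Z, proper_total_difference_labeling adj k f.

Definition is_chi_td {V : Type} (adj : V -> V -> Prop) (n : Z) : Prop :=
  1 <= n /\ has_ptd_labeling adj n /\
  (forall k, 1 <= k < n -> ~ has_ptd_labeling adj k).

Definition Z3 : Type := (Z * Z * Z)%type.

Definition cubic_adj (p q : Z3) : Prop :=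
  let '(x1, y1, z1) := p in
  let '(x2, y2, z2) := q in
  (Z.abs (x1 - x2) = 1 /\ y1 = y2 /\ z1 = z2) \/
  (x1 = x2 /\ Z.abs (y1 - y2) = 1 /\ z1 = z2) \/
  (x1 = x2 /\ y1 = y2 /\ Z.abs (z1 - z2) = 1).

(* Lower bound: at a vertex labelled c, the six incident edges carry six
   distinct labels |c - v|, each with v <> c, |c - v| <> c and |c - v| <> v.
   So every label that occurs must have at least six such "partner
   differences" among the labels that occur.  Starting from {1, ..., 11} and
   repeatedly discarding labels without six partner differences empties the set.

   Upper bound: x + 2y + 3z mod 7 maps the six neighbours of a vertex to the
   six other residues mod 7, so composing it with a proper 13-total difference
   labeling of the complete graph on the seven residues labels the lattice. *)

From Stdlib Require Import ZArith Lia List Classical.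
Import ListNotations.
Open Scope Z_scope.

Lemma is_chi_td_between {V : Type} (adj : V -> V -> Prop) (n : Z) :
  1 <= n ->
  (forall k, 1 <= k < n -> ~ has_ptd_labeling adj k) ->
  has_ptd_labeling adj (n + 1) ->
  exists m, is_chi_td adj m /\ n <= m <= n + 1.
Proof.
  intros n_pos below above.
  destruct (classic (has_ptd_labeling adj n)) as [at_n | not_at_n].
  - exists n; repeat split; auto; lia.
  - exists (n + 1); repeat split; auto; try lia.
    intros k Hk; destruct (Z.eq_dec k n) as [-> | Hkn]; [exact not_at_n|].
    apply below; lia.
Qed.

Definition admissible_partner (c v : Z) : bool :=
  negb (v =? c) && negb (Z.abs (c - v) =? c) && negb (Z.abs (c - v) =? v).

Definition partner_differences (c : Z) (L : list Z) : list Z :=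
  nodup Z.eq_dec (map (fun v => Z.abs (c - v)) (filter (admissible_partner c) L)).

Definition prune (d : nat) (L : list Z) : list Z :=
  filter (fun c => (d <=? length (partner_differences c L))%nat) L.

Section Pruning.

Variables (V : Type) (adj : V -> V -> Prop) (k : Z) (f : V -> Z) (d : nat).
Hypothesis f_proper : proper_total_difference_labeling adj k f.
Hypothesis degree_ge :
  forall u, exists ns, length ns = d /\ NoDup ns /\ Forall (adj u) ns.

Lemma edge_label_partner_difference (L : list Z) (u v : V) :
  (forall w, In (f w) L) -> adj u v ->
  In (edge_label f u v) (partner_differences (f u) L).
Proof.
  intros image_L uv.
  destruct f_proper as [_ [distinct_ends [_ edge_vs_ends]]].
  pose proof (distinct_ends _ _ uv) as ne_uv.
  destruct (edge_vs_ends _ _ uv) as [ne_u ne_v].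
  unfold edge_label in *.
  apply nodup_In, (in_map (fun w => Z.abs (f u - w))), filter_In.
  split; [apply image_L|].
  unfold admissible_partner.
  repeat match goal with |- context [?a =? ?b] => destruct (Z.eqb_spec a b) end;
    simpl; congruence.
Qed.

Lemma prune_image (L : list Z) :
  (forall u, In (f u) L) -> forall u, In (f u) (prune d L).
Proof.
  intros image_L u.
  apply filter_In; split; [apply image_L|].
  apply Nat.leb_le.
  destruct (degree_ge u) as [ns [<- [ns_uniq ns_adj]]].
  rewrite Forall_forall in ns_adj.
  rewrite <- (length_map (edge_label f u)).
  apply NoDup_incl_length.
  - apply NoDup_map_NoDup_ForallPairs; [|exact ns_uniq].
    intros v w in_v in_w same_label.
    destruct f_proper as [_ [_ [distinct_edges _]]].
    destruct (classic (v = w)) as [| ne_vw]; [assumption|].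
    exfalso; exact (distinct_edges u v w (ns_adj v in_v) (ns_adj w in_w) ne_vw same_label).
  - intros e He; apply in_map_iff in He; destruct He as [v [<- in_v]].
    apply edge_label_partner_difference; auto.
Qed.

Lemma pruning_never_empties (L : list Z) (n : nat) (u : V) :
  (forall w, In (f w) L) -> Nat.iter n (prune d) L <> [].
Proof.
  intros image_L empty.
  assert (image_iter : forall w, In (f w) (Nat.iter n (prune d) L)).
  { clear empty; induction n as [| n IH]; simpl; auto using prune_image. }
  rewrite empty in image_iter; exact (image_iter u).
Qed.

End Pruning.

Definition cubic_neighbours (p : Z3) : list Z3 :=
  let '(x, y, z) := p in
  [(x + 1, y, z); (x - 1, y, z); (x, y + 1, z);
   (x, y - 1, z); (x, y, z + 1); (x, y, z - 1)].

Lemma cubic_degree_6 (p : Z3) :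
  exists ns, length ns = 6%nat /\ NoDup ns /\ Forall (cubic_adj p) ns.
Proof.
  exists (cubic_neighbours p); destruct p as [[x y] z]; split; [reflexivity|split].
  - repeat constructor; simpl; intros H;
      repeat destruct H as [H | H]; try injection H; lia.
  - repeat constructor; simpl; lia.
Qed.

Definition label_range (k : Z) : list Z := map Z.of_nat (seq 1 (Z.to_nat k)).

Lemma in_label_range (k x : Z) : 1 <= x <= k -> In x (label_range k).
Proof.
  intros Hx; apply in_map_iff; exists (Z.to_nat x); split; [lia|].
  apply in_seq; lia.
Qed.

Lemma prune_label_range_11 : Nat.iter 5 (prune 6) (label_range 11) = [].
Proof. vm_compute; reflexivity. Qed.

Lemma cubic_no_ptd_labeling (k : Z) : k <= 11 -> ~ has_ptd_labeling cubic_adj k.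
Proof.
  intros Hk [f Hf].
  apply (pruning_never_empties Z3 cubic_adj k f 6 Hf cubic_degree_6
           (label_range 11) 5 (0, 0, 0)); [|exact prune_label_range_11].
  intros w; apply in_label_range; destruct Hf as [range _]; specialize (range w); lia.
Qed.

Lemma ptd_labeling_pullback {V W : Type} (adjV : V -> V -> Prop)
    (adjW : W -> W -> Prop) (h : V -> W) (k : Z) (g : W -> Z) :
  (forall u v, adjV u v -> adjW (h u) (h v)) ->
  (forall u v w, adjV u v -> adjV u w -> v <> w -> h v <> h w) ->
  proper_total_difference_labeling adjW k g ->
  proper_total_difference_labeling adjV k (fun v => g (h v)).
Proof.
  intros h_adj h_locally_injective [range [ends [edges edge_vs_ends]]].
  unfold proper_total_difference_labeling, edge_label in *.
  split; [|split; [|split]].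
  - intros v; apply range.
  - intros u v uv; apply ends; auto.
  - intros u v w uv uw vw; apply edges; eauto.
  - intros u v uv; apply edge_vs_ends; auto.
Qed.

Definition complete_adj (n a b : Z) : Prop := 0 <= a < n /\ 0 <= b < n /\ a <> b.

Definition complete7_label (a : Z) : Z :=
  match a with 0 => 13 | 1 => 4 | 2 => 10 | 3 => 1 | 4 => 9 | 5 => 12 | _ => 3 end.

Lemma residue_7_cases (a : Z) : 0 <= a < 7 ->
  a = 0 \/ a = 1 \/ a = 2 \/ a = 3 \/ a = 4 \/ a = 5 \/ a = 6.
Proof. lia. Qed.

Ltac residue_7_cases a a_range :=
  destruct (residue_7_cases a a_range) as [|[|[|[|[|[|]]]]]]; subst a.

Lemma complete7_ptd_labeling :
  proper_total_difference_labeling (complete_adj 7) 13 complete7_label.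
Proof.
  unfold proper_total_difference_labeling, complete_adj, edge_label.
  split; [|split; [|split]].
  - intros a; unfold complete7_label.
    repeat match goal with |- context [match ?x with _ => _ end] => destruct x end; lia.
  - intros a b [Ha [Hb Hab]].
    residue_7_cases a Ha; residue_7_cases b Hb; cbn; lia.
  - intros a b c [Ha [Hb Hab]] [_ [Hc Hac]] Hbc.
    residue_7_cases a Ha; residue_7_cases b Hb; residue_7_cases c Hc; cbn; lia.
  - intros a b [Ha [Hb Hab]].
    residue_7_cases a Ha; residue_7_cases b Hb; cbn; lia.
Qed.

Lemma eq_of_mod_eq_close (m a b : Z) :
  0 < m -> a mod m = b mod m -> Z.abs (a - b) < m -> a = b.
Proof.
  intros m_pos same_mod close.
  pose proof (Z.div_mod a m ltac:(lia)); pose proof (Z.div_mod b m ltac:(lia)).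
  assert (m * (a / m - b / m) = a - b) as diff by lia.
  assert (a / m - b / m = 0) by nia.
  lia.
Qed.

Definition cubic_residue (p : Z3) : Z := let '(x, y, z) := p in (x + 2 * y + 3 * z) mod 7.

Lemma cubic_residue_range (p : Z3) : 0 <= cubic_residue p < 7.
Proof. destruct p as [[x y] z]; apply Z.mod_pos_bound; lia. Qed.

Lemma cubic_residue_adj (p q : Z3) :
  cubic_adj p q -> complete_adj 7 (cubic_residue p) (cubic_residue q).
Proof.
  intros pq; split; [|split]; try apply cubic_residue_range.
  destruct p as [[x1 y1] z1], q as [[x2 y2] z2]; unfold cubic_residue, cubic_adj in *.
  intros same_residue; apply eq_of_mod_eq_close in same_residue; lia.
Qed.

Lemma cubic_residue_locally_injective (p q r : Z3) :
  cubic_adj p q -> cubic_adj p r -> q <> r -> cubic_residue q <> cubic_residue r.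
Proof.
  destruct p as [[x1 y1] z1], q as [[x2 y2] z2], r as [[x3 y3] z3].
  unfold cubic_residue, cubic_adj.
  intros pq pr qr same_residue; apply qr.
  apply eq_of_mod_eq_close in same_residue; [|lia|lia].
  f_equal; [f_equal|]; lia.
Qed.

Lemma cubic_ptd_labeling_13 : has_ptd_labeling cubic_adj 13.
Proof.
  exists (fun p => complete7_label (cubic_residue p)).
  apply (ptd_labeling_pullback cubic_adj (complete_adj 7)).
  - exact cubic_residue_adj.
  - exact cubic_residue_locally_injective.
  - exact complete7_ptd_labeling.
Qed.

Theorem mainTheorem5 :
  exists n : Z, is_chi_td cubic_adj n /\ 12 <= n <= 13.
Proof.
  apply is_chi_td_between; [lia | | exact cubic_ptd_labeling_13].
  intros k Hk; apply cubic_no_ptd_labeling; lia.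
Qed.
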